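(* Let $M$ be a rank-$3$ matroid on $[n]$ with no circuits of size $3$. Let $P_1,\dots,P_k$ be the distinct parallel classes of $M$ having more than one element, and let $N$ be the set of non-loop elements that are not parallel to any other element. Then $M$ is DJS if and only if $$\left\lfloor\tfrac{|P_1|}{2}\right\rfloor+\cdots+\left\lfloor\tfrac{|P_k|}{2}\right\rfloor-k<|N|-2.$$
   Context: A rank-$3$ matroid $M$ on $[n]$ is called DJS if, letting $E$ be the set of non-loop elements of $M$, every linear ordering $w_1w_2\cdots w_m$ of $E$ has three consecutive elements $\{w_j,w_{j+1},w_{j+2}\}$ forming a basis of $M$. *)

From HB Require Import structures.
From mathcomp Require Import all_boot all_order all_algebra.
Set Implicit Arguments. Unset Strict Implicit. Unset Printing Implicit Defensive.

Record matroid (n : nat) := Matroid {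
  indep : {set 'I_n} -> bool;
  indep0 : indep set0;
  indep_sub : forall A B : {set 'I_n}, B \subset A -> indep A -> indep B;
  indep_exchange : forall A B : {set 'I_n}, indep A -> indep B ->
      #|A| < #|B| -> exists2 x, x \in B :\: A & indep (x |: A)
}.

Section MatroidDefs.
Variables (n : nat) (M : matroid n).

Definition mrank : nat := \max_(A : {set 'I_n} | indep M A) #|A|.

Definition is_basis (B : {set 'I_n}) : bool := maxset (indep M) B.

Definition is_circuit (C : {set 'I_n}) : bool := minset (fun X => ~~ indep M X) C.

Definition is_loop (x : 'I_n) : bool := ~~ indep M [set x].

Definition nonloops : {set 'I_n} := [set x | ~~ is_loop x].

Definition parallel (x y : 'I_n) : bool :=
  [&& ~~ is_loop x, ~~ is_loop y & (x == y) || ~~ indep M [set x; y]].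

Definition parallel_classes : {set {set 'I_n}} :=
  [set [set y | parallel x y] | x in nonloops].

Definition big_parallel_classes : {set {set 'I_n}} :=
  [set P in parallel_classes | 1 < #|P|].

Definition lone_elements : {set 'I_n} :=
  [set x in nonloops | [forall y, parallel x y ==> (y == x)]].

Definition DJS : Prop :=
  forall w : seq 'I_n, perm_eq w (enum nonloops) ->
    exists (s1 s2 : seq 'I_n) (a b c : 'I_n),
      w = s1 ++ [:: a; b; c] ++ s2 /\ is_basis [set a; b; c].

End MatroidDefs.

From mathcomp Require Import all_boot all_order all_algebra zify.
Set Implicit Arguments. Unset Strict Implicit. Unset Printing Implicit Defensive.

(* With rank 3 and no circuit of size 3, three non-loops form a basis exactly
   when they are pairwise non-parallel.  So M fails to be DJS iff some ordering
   of the non-loops has a parallel pair in every window of three consecutive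
   elements.  Read such an ordering through the parallel classes: a class that
   occurs for the last time before the final two positions is followed there by
   two consecutive elements of one class, and the pairs charged to one class
   are disjoint.  Hence the number k + |N| of classes is at most
   2 + sum_i floor(|P_i|/2).  Conversely, when k + |N| <= 2 + sum_i floor(|P_i|/2),
   list each big class P_i two elements at a time, inserting floor(|P_i|/2) - 1
   lone elements between its pairs, and put the at most two remaining lone
   elements at both ends: every window then contains a parallel pair. *)

Section Windows.
Variable T : eqType.
Implicit Types (r : rel T) (s t : seq T).

Definition linked3 r a b c := [|| r a b, r b c | r a c].

Fixpoint linked_windows r s :=
  if s is a :: s' then
    (if s' is b :: c :: _ then linked3 r a b c else true) && linked_windows r s'
  else true.

Definition head_linked r s := if s is a :: b :: _ then r a b else true.

Lemma linked_windows_linked3 r s1 s2 a b c :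
  linked_windows r (s1 ++ [:: a; b; c] ++ s2) -> linked3 r a b c.
Proof. by elim: s1 => [|x s1 IH] /= /andP[]. Qed.

Lemma unlinked_window r s : ~~ linked_windows r s ->
  exists s1 s2 a b c, s = s1 ++ [:: a; b; c] ++ s2 /\ ~~ linked3 r a b c.
Proof.
elim: s => [|x s IH] //=; rewrite negb_and => /orP[|/IH[s1 [s2 [a [b [c [-> H]]]]]]].
  by case: s {IH} => [|b [|c s]] // H; exists [::], s, x, b, c.
by exists (x :: s1), s2, a, b, c.
Qed.

Lemma sub_linked_windows r r' s : subrel r r' -> linked_windows r s -> linked_windows r' s.
Proof.
move=> rr'; elim: s => [|x s IH] //= /andP[W /IH ->]; rewrite andbT.
by case: s {IH} W => [|b [|c s]] //; rewrite /linked3 => /or3P[] /rr' ->; rewrite ?orbT.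
Qed.

Lemma linked_windows_cons r a s :
  head_linked r s -> linked_windows r s -> linked_windows r (a :: s).
Proof. by case: s => [|u [|v s]] //= ruv ->; rewrite /linked3 ruv orbT. Qed.

Lemma linked_windows_cons2 r a b s :
  r a b -> linked_windows r (b :: s) -> linked_windows r (a :: b :: s).
Proof. by case: s => [|c s] //= rab ->; rewrite /linked3 rab. Qed.

Lemma linked_windows_cons3 r a b c s :
  r a c -> linked_windows r (b :: c :: s) -> linked_windows r (a :: b :: c :: s).
Proof. by move=> /= rac ->; rewrite /linked3 rac !orbT. Qed.

Definition clique r (c : seq T) := {in c &, forall x y, r x y}.

Lemma clique_behead r x (c : seq T) : clique r (x :: c) -> clique r c.
Proof. by move=> Hc u v Hu Hv; apply: Hc; rewrite inE ?Hu ?Hv orbT. Qed.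

Lemma linked_windows_cat_clique r (c : seq T) s : clique r c ->
  head_linked r s -> linked_windows r s -> linked_windows r (c ++ s).
Proof.
elim: c => [|x [|y c] IH] // Hc Hs Hl /=; first exact: linked_windows_cons.
apply: linked_windows_cons2; first by apply: Hc; rewrite !inE eqxx ?orbT.
exact: IH (clique_behead Hc) Hs Hl.
Qed.

Fixpoint weave (c t : seq T) : seq T :=
  if (c, t) is (c0 :: c1 :: c', x :: t') then [:: c0, c1, x & weave c' t'] else c ++ t.

Lemma perm_weave (c t : seq T) : perm_eq (weave c t) (c ++ t).
Proof.
elim: t c => [|x t IH] [|c0 [|c1 c]] //=.
rewrite 2!perm_cons perm_sym -[x :: t]cat1s perm_catCA /= perm_cons perm_sym.
exact: IH.
Qed.

Lemma weave_cons2 (c0 c1 : T) c t : exists rest, weave [:: c0, c1 & c] t = [:: c0, c1 & rest].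
Proof. by case: t => [|x t] /=; eexists. Qed.

Lemma linked_windows_weave r (c : seq T) t s : clique r c -> 2 * size t + 2 <= size c ->
  head_linked r s -> linked_windows r s ->
  linked_windows r (weave c t ++ s) /\ head_linked r (weave c t ++ s).
Proof.
move=> + + Hs Hl; elim: t c => [|x t IH] [|c0 [|c1 c]] Hc Hsz; rewrite /= in Hsz; try lia.
  rewrite /= cats0; split; last by apply: Hc; rewrite !inE eqxx ?orbT.
  exact: (linked_windows_cat_clique Hc).
case: c Hc Hsz => [|c2 [|c3 c]] Hc Hsz; rewrite /= in Hsz; try lia.
have [rest Erest] := weave_cons2 c2 c3 c t.
have [] := IH [:: c2, c3 & c] (clique_behead (clique_behead Hc)); first by rewrite /=; lia.
have -> : weave [:: c0, c1, c2, c3 & c] (x :: t) = [:: c0, c1, x & weave [:: c2, c3 & c] t].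
  by [].
rewrite Erest !cat_cons => Hrest Hc23; split; last by apply: Hc; rewrite !inE eqxx ?orbT.
apply: linked_windows_cons2; first by apply: Hc; rewrite !inE eqxx ?orbT.
apply: linked_windows_cons3; first by apply: Hc; rewrite !inE eqxx ?orbT.
exact: linked_windows_cons.
Qed.

Lemma linked_windows_blocks r (cs : seq (seq T)) ss base :
  (forall c, c \in cs -> clique r c /\ 1 < size c) ->
  size ss <= \sum_(c <- cs) (size c)./2.-1 ->
  head_linked r base -> linked_windows r base ->
  exists2 w, perm_eq w (flatten cs ++ ss ++ base) & linked_windows r w /\ head_linked r w.
Proof.
move=> + + Hb Hl; elim: cs ss => [|c cs IH] ss Hcs.
  by rewrite big_nil leqn0 size_eq0 => /eqP ->; exists base.
rewrite big_cons => Hss; set q := (size c)./2.-1.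
have [Hc Hc2] := Hcs c (mem_head _ _).
have [w' Pw' Lw'] : exists2 w', perm_eq w' (flatten cs ++ drop q ss ++ base)
    & linked_windows r w' /\ head_linked r w'.
  by apply: IH; [move=> d Hd; apply: Hcs; rewrite inE Hd orbT | rewrite size_drop; lia].
have Hq : 2 * size (take q ss) + 2 <= size c.
  by rewrite size_take /q; have := odd_double_half (size c); case: ltnP; lia.
exists (weave c (take q ss) ++ w'); last by case: Lw' => ? ?; apply: linked_windows_weave.
rewrite -[ss in X in perm_eq _ X](cat_take_drop q) /=.
apply: perm_trans (perm_cat (perm_weave c (take q ss)) Pw') _.
by rewrite -!catA perm_cat2l perm_catCA.
Qed.

Lemma linked_arrangement r (cs : seq (seq T)) ss :
  (forall c, c \in cs -> clique r c /\ 1 < size c) ->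
  size ss <= \sum_(c <- cs) (size c)./2.-1 + 2 ->
  exists2 w, perm_eq w (flatten cs ++ ss) & linked_windows r w.
Proof.
move=> Hcs; set q := \sum_(c <- cs) _ => Hss.
have Hmid : size (take q ss) <= q by rewrite size_take; case: ltnP; lia.
have [Hb Lb] : head_linked r (drop q.+1 ss) /\ linked_windows r (drop q.+1 ss).
  by case: (drop q.+1 ss) (size_drop q.+1 ss) => [|? [|? ?]] //=; lia.
have [w' Pw' [Lw' Hw']] := linked_windows_blocks Hcs Hmid Hb Lb.
exists (take 1 (drop q ss) ++ w'); last first.
  by case: (drop q ss) => [|e t] /=; rewrite ?take0; [exact: Lw' | exact: linked_windows_cons].
rewrite -(perm_cat2l (take 1 (drop q ss))) in Pw'; apply: perm_trans Pw' _.
rewrite -[ss in X in perm_eq _ X](cat_take_drop q).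
rewrite -[drop q ss in X in perm_eq _ X](cat_take_drop 1).
by rewrite drop_drop add1n perm_catCA perm_cat2l perm_catCA.
Qed.

Lemma uniq_window s1 s2 (a b c : T) :
  uniq (s1 ++ [:: a; b; c] ++ s2) -> [/\ a != b, b != c & a != c].
Proof.
rewrite cat_uniq => /and3P[_ _]; rewrite cat_uniq => /and3P[/= + _ _].
by rewrite !inE !negb_or => /and3P[/andP[-> ->] -> _].
Qed.

End Windows.

Lemma linked_windows_map (T U : eqType) (f : U -> T) (r : rel T) (s : seq U) :
  linked_windows r (map f s) = linked_windows (relpre f r) s.
Proof. by elim: s => [|x s IH] //=; rewrite IH; case: s {IH} => [|b [|c s]]. Qed.

Section PairCount.
Variable L : finType.
Implicit Types (l : seq L).

Definition npairs l := \sum_(C : L) (count_mem C l)./2.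

(* Extra room in the bound for [l]: available when [l] starts with a repeated
   pair or its head has even multiplicity, and consumed when a fresh element is
   prepended to a repeated pair. *)
Definition slack l : bool :=
  if l is a :: b :: _ then (a == b) || ~~ odd (count_mem a l) else true.

Lemma npairs_nil : npairs [::] = 0.
Proof. by rewrite /npairs big1. Qed.

Lemma npairs_cons x l : npairs (x :: l) = npairs l + odd (count_mem x l).
Proof.
rewrite /npairs (bigD1 x) //= [in RHS](bigD1 x) //= eqxx add1n -uphalfE uphalf_half.
rewrite (eq_bigr (fun C => (count_mem C l)./2)) => [|C /negbTE]; last by rewrite eq_sym => ->.
by rewrite [RHS]addnC addnA.
Qed.

Lemma slack_cons2 x a l : slack [:: x, a & l] = (x == a) || odd (count_mem x (a :: l)).
Proof. by rewrite /slack /= eqxx add1n negbK. Qed.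

Lemma slack_fresh x a l : x \notin a :: l -> slack [:: x, a & l] = false.
Proof.
move=> xl; rewrite slack_cons2 (count_memPn xl) orbF.
by apply: contraNF xl => /eqP ->; apply: mem_head.
Qed.

Lemma size_undup_cons (x : L) l : size (undup (x :: l)) = size (undup l) + (x \notin l).
Proof. by rewrite /=; case: (x \in l); rewrite ?addn0 ?addn1. Qed.

Lemma size_undup_le_npairs l :
  linked_windows eq_op l -> size (undup l) + slack l <= npairs l + 2.
Proof.
elim: l => [|x l IH]; first by rewrite npairs_nil.
rewrite [linked_windows _ _]/= => /andP[Wx /IH {}IH].
rewrite npairs_cons size_undup_cons; have [xl|xl] := boolP (x \in l).
  case: l xl IH Wx => [|a l] // xl IH _; rewrite slack_cons2.
  case Hodd: (odd _); first by rewrite orbT; lia.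
  rewrite orbF; case: eqVneq => [Exa|]; last by lia.
  case: l xl Hodd IH => [|b l] _ Hodd; first by rewrite -Exa /= eqxx in Hodd.
  by subst a; rewrite /slack Hodd orbT; lia.
have -> : count_mem x l = 0 by apply/count_memPn.
case: l xl IH Wx => [|a [|b l]] xl IH Wx; first by rewrite npairs_nil.
  by rewrite slack_fresh //=; lia.
rewrite slack_fresh //; move: xl Wx; rewrite !inE !negb_or /linked3.
move=> /and3P[/negbTE -> /negbTE -> _]; rewrite orbF orFb => ab.
by rewrite /slack ab in IH; lia.
Qed.

End PairCount.

Section Matroid.
Variables (n : nat) (M : matroid n).
Implicit Types (x y z : 'I_n) (A B C S : {set 'I_n}).
Local Notation indep := (indep M).
Local Notation par := (parallel M).
Local Notation NL := (nonloops M).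

Lemma indep_card_le_rank A : indep A -> #|A| <= mrank M.
Proof. by move=> IA; rewrite /mrank (leq_bigmax_cond (F := fun A => #|A|) _ IA). Qed.

Lemma basis_of_indep_rank A : indep A -> #|A| = mrank M -> is_basis M A.
Proof.
move=> IA rA; apply/maxsetP; split=> // B IB sAB; apply/eqP.
by rewrite eq_sym eqEcard sAB rA indep_card_le_rank.
Qed.

Lemma circuit_of_delete_indep C :
  ~~ indep C -> (forall z, z \in C -> indep (C :\ z)) -> is_circuit M C.
Proof.
move=> DC IC; apply/minsetP; split=> // B DB sBC; apply/eqP; rewrite eqEsubset sBC /=.
apply/subsetP => z zC; apply: contraNT DB => zB; apply: indep_sub (IC z zC).
by apply/subsetP => y yB; rewrite in_setD1 (subsetP sBC) // andbT; apply: contraNneq zB => <-.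
Qed.

Lemma triple_basis a b c : mrank M = 3 -> (forall C, is_circuit M C -> #|C| != 3) ->
  a != b -> b != c -> a != c ->
  indep [set a; b] -> indep [set b; c] -> indep [set a; c] -> is_basis M [set a; b; c].
Proof.
move=> r3 noC3 ab bc ac Iab Ibc Iac.
have card3 : #|[set a; b; c]| = 3.
  by rewrite -setUA cardsU1 cards2 bc !inE negb_or ab ac.
apply: basis_of_indep_rank; last by rewrite card3.
apply/negPn/negP => Dabc.
suff /noC3 : is_circuit M [set a; b; c] by rewrite card3.
apply: (circuit_of_delete_indep Dabc) => z; rewrite !inE -orbA => /or3P[] /eqP ->;
  [apply: (indep_sub _ Ibc) | apply: (indep_sub _ Iac) | apply: (indep_sub _ Iab)];
  by apply/subsetP => y; rewrite !inE; case: eqP => //= _; rewrite ?orbF.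
Qed.

Lemma in_nonloops x : (x \in NL) = indep [set x].
Proof. by rewrite inE /is_loop negbK. Qed.

Lemma parallelE x y : par x y = [&& x \in NL, y \in NL & (x == y) || ~~ indep [set x; y]].
Proof. by rewrite /parallel !inE. Qed.

Lemma parallel_sym : symmetric par.
Proof. by move=> x y; rewrite !parallelE setUC eq_sym; case: (x \in NL); case: (y \in NL). Qed.

Lemma parallel_refl x : x \in NL -> par x x.
Proof. by move=> Hx; rewrite parallelE Hx eqxx. Qed.

Lemma parallel_nonloop x y : par x y -> x \in NL.
Proof. by rewrite parallelE => /andP[]. Qed.

Lemma parallel_neq x y : x \in NL -> ~~ par x y -> x != y.
Proof. by move=> Hx; apply: contraNneq => <-; apply: parallel_refl. Qed.

Lemma indep_pair x y : x \in NL -> y \in NL -> ~~ par x y -> indep [set x; y].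
Proof. by move=> Hx Hy; rewrite parallelE Hx Hy negb_or negbK => /andP[]. Qed.

Lemma not_parallel_sub S x y : x != y -> x \in S -> y \in S -> indep S -> ~~ par x y.
Proof.
move=> xy xS yS IS; rewrite parallelE (negbTE xy) (indep_sub _ IS) ?andbF //.
by apply/subsetP => u; rewrite !inE => /orP[] /eqP ->.
Qed.

Lemma parallel_trans : transitive par.
Proof.
move=> y x z; rewrite !parallelE => /and3P[Hx Hy Hxy] /and3P[_ Hz Hyz].
rewrite Hx Hz; case: (eqVneq x z) => //= xz; apply/negP => Ixz.
have [xy yz] : x != y /\ y != z.
  split; apply/eqP => E; [subst y | subst z].
    by rewrite (negbTE xz) Ixz in Hyz.
  by rewrite (negbTE xz) Ixz in Hxy.
rewrite in_nonloops in Hy.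
have := indep_exchange Hy Ixz; rewrite cards1 cards2 xz => /(_ isT) [e].
rewrite !inE => /andP[_ /orP[] /eqP ->].
  by rewrite (negbTE xy) in Hxy; apply/negP.
by rewrite setUC; rewrite (negbTE yz) in Hyz; apply/negP.
Qed.

Local Notation classes := (parallel_classes M).
Local Notation big := (big_parallel_classes M).
Local Notation lone := (lone_elements M).

Definition pclass x := [set y | par x y].

Lemma in_pclass x y : (y \in pclass x) = par x y.
Proof. by rewrite inE. Qed.

Lemma pclass_refl x : x \in NL -> x \in pclass x.
Proof. by rewrite in_pclass; apply: parallel_refl. Qed.

Lemma pclass_eq x y : par x y -> pclass x = pclass y.
Proof.
move=> xy; apply/setP => z; rewrite !in_pclass; apply/idP/idP => [xz|].
  by apply: parallel_trans xz; rewrite parallel_sym.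
exact: parallel_trans.
Qed.

Lemma pclass_in_classes x : x \in NL -> pclass x \in classes.
Proof. exact: imset_f. Qed.

Lemma mem_pclasses P x : P \in classes -> (x \in P) = (x \in NL) && (P == pclass x).
Proof.
case/imsetP => z _ ->; rewrite -/(pclass z).
apply/idP/andP => [|[Hx /eqP ->]]; last exact: pclass_refl.
rewrite in_pclass => zx.
by split; [apply: (parallel_nonloop (y := z)); rewrite parallel_sym | apply/eqP/pclass_eq].
Qed.

Lemma pclass_big x : x \in NL -> (pclass x \in big) = (1 < #|pclass x|).
Proof. by move=> Hx; rewrite inE pclass_in_classes. Qed.

Lemma in_lone x : (x \in lone) = (x \in NL) && (#|pclass x| <= 1).
Proof.
rewrite inE; case Hx: (x \in NL) => //=; apply/forallP/card_le1_eqP => [H y z|H y].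
  by rewrite !in_pclass => /(implyP (H y)) /eqP -> /(implyP (H z)) /eqP ->.
by apply/implyP => xy; apply/eqP/H; rewrite ?in_pclass ?parallel_refl.
Qed.

Lemma card_big_lone_le : #|big| + #|lone| <= #|classes|.
Proof.
have big_sub : big \subset classes by apply/subsetP => P; rewrite inE => /andP[].
rewrite -(cardsID big classes) (setIidPr big_sub) leq_add2l.
have lone_inj : {in lone &, injective pclass}.
  move=> x y; rewrite !in_lone => /andP[Hx /card_le1_eqP x1] /andP[Hy _] Exy.
  by apply/esym/(x1 x y); [exact: pclass_refl | rewrite Exy; exact: pclass_refl].
rewrite -(card_in_imset lone_inj); apply: subset_leq_card.
apply/subsetP => P /imsetP[x]; rewrite in_lone => /andP[Hx x1] ->.
by rewrite inE pclass_big // pclass_in_classes // ltnNge x1.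
Qed.

Lemma count_pclass w C : perm_eq w (enum NL) ->
  count_mem C (map pclass w) = if C \in classes then #|C| else 0.
Proof.
move=> Pw; rewrite (permP (perm_map pclass Pw)) count_map -sum1_count big_enum_cond /=.
rewrite sum1dep_card; case: ifP => HC.
  suff -> : [set x in NL | pclass x == C] = C by [].
  by apply/setP => x; rewrite inE (mem_pclasses _ HC) eq_sym.
apply: eq_card0 => x; rewrite inE; apply: contraFF HC => /andP[Hx /eqP <-].
exact: pclass_in_classes.
Qed.

Lemma size_undup_pclass w : perm_eq w (enum NL) -> size (undup (map pclass w)) = #|classes|.
Proof.
move=> Pw; rewrite -(card_uniqP (undup_uniq _)); apply: eq_card => C; rewrite mem_undup.
apply/mapP/imsetP => -[x Hx ->]; exists x => //.
  by rewrite -mem_enum -(perm_mem Pw).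
by rewrite (perm_mem Pw) mem_enum.
Qed.

Lemma npairs_pclass w : perm_eq w (enum NL) ->
  npairs (map pclass w) = \sum_(P in big) #|P|./2.
Proof.
move=> Pw; rewrite /npairs [RHS]big_mkcond /=; apply: eq_bigr => C _.
rewrite count_pclass // inE; case: (C \in classes) => //=.
by case: ltnP => // C1; case: #|C| C1 => [|[]].
Qed.

Definition big_class_enums : seq (seq 'I_n) := [seq enum (P : {set 'I_n}) | P <- enum big].

Lemma count_big_classes x :
  count_mem x (flatten big_class_enums) = (x \in NL) && (1 < #|pclass x|).
Proof.
rewrite count_flatten -map_comp sumnE big_map big_enum /=.
rewrite (eq_bigr (fun P => ((x \in NL) && (P == pclass x) : nat))) => [|P]; last first.
  by rewrite inE => /andP[HP _] /=; rewrite count_uniq_mem ?enum_uniq // mem_enum mem_pclasses.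
case Hx: (x \in NL) => /=; last by rewrite big1.
rewrite -pclass_big //; have [Pbig|Pnbig] := boolP (pclass x \in big).
  by rewrite (bigD1 (pclass x)) //= eqxx big1 // => P /andP[_ /negbTE ->].
by rewrite big1 // => P HP; case: eqP HP => // ->; rewrite (negbTE Pnbig).
Qed.

Lemma perm_big_classes_lone : perm_eq (flatten big_class_enums ++ enum lone) (enum NL).
Proof.
apply/allP => x _; apply/eqP.
rewrite count_cat count_big_classes !count_uniq_mem ?enum_uniq // !mem_enum in_lone.
by case: (x \in NL); case: leqP.
Qed.

Lemma big_class_enums_cliques c : c \in big_class_enums -> clique par c /\ 1 < size c.
Proof.
case/mapP => P; rewrite mem_enum inE => /andP[HP P1] ->; split; last by rewrite -cardE.
move=> x y; rewrite !mem_enum (mem_pclasses _ HP) => /andP[_ /eqP ->].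
by rewrite in_pclass.
Qed.

Lemma big_class_enums_budget :
  \sum_(c <- big_class_enums) (size c)./2.-1 + #|big| = \sum_(P in big) #|P|./2.
Proof.
rewrite big_map big_enum /= -sum1_card -big_split /=; apply: eq_bigr => P.
by rewrite inE -cardE => /andP[_]; case: #|P| => [|[|k]] //= _; rewrite addn1.
Qed.

Lemma linked_ordering_of_le : #|lone| + #|big| <= \sum_(P in big) #|P|./2 + 2 ->
  exists2 w, perm_eq w (enum NL) & linked_windows par w.
Proof.
move=> Hle; have [|w Pw Lw] := linked_arrangement (ss := enum lone) big_class_enums_cliques.
  by rewrite -cardE; move: Hle; rewrite -big_class_enums_budget addnAC leq_add2r.
by exists w => //; apply: perm_trans Pw perm_big_classes_lone.
Qed.

Lemma DJS_unlinked w : DJS M -> perm_eq w (enum NL) -> ~~ linked_windows par w.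
Proof.
move=> D Pw; apply/negP => Lw; have [s1 [s2 [a [b [c [Ew Bw]]]]]] := D w Pw.
have := perm_uniq Pw; rewrite enum_uniq Ew => /uniq_window[ab bc ac].
have Iabc := maxsetp Bw; rewrite Ew in Lw.
case/or3P: (linked_windows_linked3 Lw); apply/negP; apply: (not_parallel_sub _ _ _ Iabc);
  by rewrite ?inE ?eqxx ?orbT.
Qed.

Lemma DJS_of_lt : mrank M = 3 -> (forall C, is_circuit M C -> #|C| != 3) ->
  \sum_(P in big) #|P|./2 + 2 < #|lone| + #|big| -> DJS M.
Proof.
move=> r3 noC3 Hlt w Pw.
have [Lw|/unlinked_window[s1 [s2 [a [b [c [Ew Uabc]]]]]]] := boolP (linked_windows par w).
  have : linked_windows eq_op (map pclass w).
    by rewrite linked_windows_map; apply: sub_linked_windows Lw => x y /pclass_eq /eqP.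
  move/size_undup_le_npairs; rewrite size_undup_pclass // npairs_pclass //.
  by have := card_big_lone_le; lia.
exists s1, s2, a, b, c; split => //.
have inNL y : y \in [:: a; b; c] -> y \in NL.
  by move=> Hy; rewrite -mem_enum -(perm_mem Pw) Ew !mem_cat Hy orbT.
have [Ha Hb Hc] : [/\ a \in NL, b \in NL & c \in NL].
  by split; apply: inNL; rewrite !inE eqxx ?orbT.
move: Uabc; rewrite /linked3 !negb_or => /and3P[nab nbc nac].
by apply: triple_basis; rewrite ?parallel_neq ?indep_pair.
Qed.

End Matroid.

Theorem proposition6p7 (n : nat) (M : matroid n) :
  mrank M = 3 ->
  (forall C : {set 'I_n}, is_circuit M C -> #|C| != 3) ->
  DJS M <->
  ((\sum_(P in big_parallel_classes M) ((#|P| %/ 2)%:Z))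
     - (#|big_parallel_classes M|)%:Z
   < (#|lone_elements M|)%:Z - 2)%R.
Proof.
move=> r3 noC3; rewrite -(big_morph Posz PoszD (erefl _)).
under eq_bigr => P _ do rewrite divn2.
have -> : forall a k m : nat, (a%:Z - k%:Z < m%:Z - 2)%R = (a + 2 < m + k).
  by move=> *; apply/idP/idP; lia.
split=> [D|]; last exact: DJS_of_lt.
rewrite ltnNge; apply/negP => /linked_ordering_of_le[w Pw Lw].
by move: Lw; apply/negP; apply: DJS_unlinked.
Qed.
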